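(* Let $n\in\mathbb{Z}$. The standard holomorphic structure $\overline{\nabla}=\overline{\nabla}_{(n)}$ on $\mathcal{L}_n$ is a bimodule connection with associated bimodule isomorphism $\Phi_{(n)}$; that is, for all $\eta\in\mathcal{L}_n$ and $f\in\mathcal{A}(\mathbb{CP}^1_q)$, $$\overline{\nabla}(\eta f)=\overline{\nabla}(\eta)\,f+\Phi_{(n)}(\eta\otimes\bar\partial f).$$
   Context: Fix $0<q<1$. Let $\mathcal{A}(SU_q(2))$ be the unital complex $*$-algebra generated by $a,c$ subject to $ac=qca$, $ac^*=qc^*a$, $cc^*=c^*c$, $a^*a+c^*c=aa^*+q^2cc^*=1$. Let $U_q(su(2))$ be the Hopf algebra generated by $K,K^{-1},E,F$ with $KK^{-1}=K^{-1}K=1$, $KE=qEK$, $KF=q^{-1}FK$, $EF-FE=(K^2-K^{-2})/(q-q^{-1})$, coproduct $\Delta K=K\otimes K$, $\Delta E=E\otimes K+K^{-1}\otimes E$, $\Delta F=F\otimes K+K^{-1}\otimes F$, counit $\epsilon(K)=1$, $\epsilon(E)=\epsilon(F)=0$. It acts on $\mathcal{A}(SU_q(2))$ from the left making it a left module algebra, with $K\triangleright a=q^{-1/2}a$, $K\triangleright c=q^{-1/2}c$, $K\triangleright a^*=q^{1/2}a^*$, $K\triangleright c^*=q^{1/2}c^*$, $E\triangleright a=-qc^*$, $E\triangleright c=a^*$, $E\triangleright a^*=E\triangleright c^*=0$, $F\triangleright a=F\triangleright c=0$, $F\triangleright a^*=c$, $F\triangleright c^*=-q^{-1}a$. Put $X_-=q^{-1/2}FK$.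 For $n\in\mathbb{Z}$ let $\mathcal{L}_n=\{x:K\triangleright x=q^{n/2}x\}$ and $\mathcal{A}(\mathbb{CP}^1_q):=\mathcal{L}_0$ (write $\mathcal{B}$ for it); each $\mathcal{L}_n$ is a $\mathcal{B}$-bimodule and $X_-\triangleright\mathcal{L}_n\subseteq\mathcal{L}_{n-2}$. Let $\Omega^1(SU_q(2))$ be the $\mathcal{A}(SU_q(2))$-bimodule which is free as a left module with basis $\omega_+,\omega_-,\omega_z$, with right multiplication determined by $\omega_\pm x=q^kx\omega_\pm$, $\omega_zx=q^{2k}x\omega_z$ for $x\in\mathcal{L}_k$. Put $\Omega^{(0,1)}(\mathbb{CP}^1_q):=\mathcal{L}_{-2}\omega_-$ and $\bar\partial f:=(X_-\triangleright f)\omega_-$ for $f\in\mathcal{B}$. The multiplication maps $\mu_1:\mathcal{L}_n\otimes_{\mathcal{B}}\Omega^{(0,1)}(\mathbb{CP}^1_q)\to\mathcal{L}_{n-2}\omega_-$ and $\mu_2:\Omega^{(0,1)}(\mathbb{CP}^1_q)\otimes_{\mathcal{B}}\mathcal{L}_n\to\mathcal{L}_{n-2}\omega_-$ (products taken in $\Omega^1(SU_q(2))$) are $\mathcal{B}$-bimodule isomorphisms; set $\Phi_{(n)}:=\mu_2^{-1}\circ\mu_1$. The standard holomorphic structure on $\mathcal{L}_n$ is $\overline{\nabla}_{(n)}:\mathcal{L}_n\to\Omega^{(0,1)}(\mathbb{CP}^1_q)\otimes_{\mathcal{B}}\mathcal{L}_n$, $\overline{\nabla}_{(n)}(\phi):=\mu_2^{-1}\big((X_-\triangleright\phi)\,\omega_-\big)$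 (equivalently $q^{-n+2}\omega_-(X_-\triangleright\phi)$); it satisfies the left Leibniz rule $\overline{\nabla}(f\phi)=f\overline{\nabla}(\phi)+\bar\partial f\otimes\phi$. Right multiplication by $f\in\mathcal{B}$ on $\Omega^{(0,1)}\otimes_{\mathcal{B}}\mathcal{L}_n$ acts on the $\mathcal{L}_n$ factor. *)

From HB Require Import structures.
From mathcomp Require Import all_boot all_order all_algebra.
From mathcomp Require Import reals.
From mathcomp Require Import complex.
From Stdlib Require Import ClassicalEpsilon.

Set Implicit Arguments.
Unset Strict Implicit.
Unset Printing Implicit Defensive.

Import Order.TTheory GRing.Theory Num.Theory.
Local Open Scope ring_scope.
Local Open Scope complex_scope.

Section StarAlg.
Variable R : realType.
Local Notation C := (complex R).

Definition is_star (A : algType C) (s : A -> A) : Prop :=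
  [/\ (forall x y, s (x + y) = s x + s y),
      (forall (k : C) x, s (k *: x) = (conjc k) *: s x),
      (forall x y, s (x * y) = s y * s x) &
      (forall x, s (s x) = x)].

Definition star_alg_hom (A B : algType C) (sA : A -> A) (sB : B -> B)
    (f : A -> B) : Prop :=
  [/\ (forall x y, f (x + y) = f x + f y),
      (forall (k : C) x, f (k *: x) = k *: f x),
      (forall x y, f (x * y) = f x * f y),
      f 1 = 1 &
      (forall x, f (sA x) = sB (f x))].

Definition SUq2_rel (q : R) (A : algType C) (s : A -> A) (a c : A) : Prop :=
  [/\ a * c = q%:C *: (c * a),
      a * s c = q%:C *: (s c * a),
      c * s c = s c * c,
      s a * a + s c * c = 1 &
      a * s a + (q%:C ^+ 2) *: (c * s c) = 1].

Definition is_ASUq2 (q : R) (A : algType C) (s : A -> A) (a c : A) : Prop :=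
  is_star s /\ SUq2_rel q s a c /\
  forall (B : algType C) (sB : B -> B) (a' c' : B),
    is_star sB -> SUq2_rel q sB a' c' ->
    (exists f : A -> B, star_alg_hom s sB f /\ f a = a' /\ f c = c') /\
    (forall f g : A -> B,
        star_alg_hom s sB f -> f a = a' -> f c = c' ->
        star_alg_hom s sB g -> g a = a' -> g c = c' ->
        forall x, f x = g x).
End StarAlg.

Section Action.
Variable R : realType.
Local Notation C := (complex R).
Variable q : R.
Variable A : algType C.

Definition qC : C := q%:C.
Definition qh : C := (Num.sqrt q)%:C.

Definition Clinear (f : A -> A) : Prop :=
  forall (k : C) x y, f (k *: x + y) = k *: f x + f y.

Definition Uq_module_algebra (K Ki E F : A -> A) : Prop :=
  [/\ [/\ Clinear K, Clinear Ki, Clinear E & Clinear F],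
      [/\ (forall x, K (Ki x) = x), (forall x, Ki (K x) = x),
          (forall x, K (E x) = qC *: E (K x)),
          (forall x, K (F x) = qC^-1 *: F (K x)) &
          (forall x, E (F x) - F (E x) =
                     (qC - qC^-1)^-1 *: (K (K x) - Ki (Ki x)))],
      [/\ (forall x y, K (x * y) = K x * K y),
          (forall x y, Ki (x * y) = Ki x * Ki y),
          (forall x y, E (x * y) = E x * K y + Ki x * E y) &
          (forall x y, F (x * y) = F x * K y + Ki x * F y)] &
      [/\ K 1 = 1, Ki 1 = 1, E 1 = 0 & F 1 = 0]].

Definition Uq_action_gens (s : A -> A) (a c : A) (K E F : A -> A) : Prop :=
  [/\ [/\ K a = qh^-1 *: a, K c = qh^-1 *: c,
          K (s a) = qh *: s a & K (s c) = qh *: s c],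
      [/\ E a = - qC *: s c, E c = s a, E (s a) = 0 & E (s c) = 0] &
      [/\ F a = 0, F c = 0, F (s a) = c & F (s c) = - qC^-1 *: a]].

Variable K F : A -> A.

Definition Xm (x : A) : A := qh^-1 *: F (K x).

(* L_k = { x | K |> x = q^{k/2} x } ; B = A(CP^1_q) = L_0 *)
Definition inL (k : int) (x : A) : Prop := K x = (qh ^ k) *: x.

(* Omega^1(SU_q(2)) : free left module on omega_+, omega_-, omega_z,   *)
(* an element  x omega_+ + y omega_- + z omega_z  is ((x, y), z).       *)
Definition Om := (A * A * A)%type.
Definition om_minus (g : A) : Om := (0, g, 0).
Definition om_lmul (x : A) (w : Om) : Om := (x * w.1.1, x * w.1.2, x * w.2).
(* right multiplication by an element y of L_k:
   omega_pm y = q^k y omega_pm,  omega_z y = q^{2k} y omega_z *)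
Definition om_rmul (k : int) (w : Om) (y : A) : Om :=
  (qC ^ k *: (w.1.1 * y), qC ^ k *: (w.1.2 * y), qC ^ (k *+ 2) *: (w.2 * y)).

(* Omega^{(0,1)}(CP^1_q) = L_{-2} omega_- *)
Definition inO01 (w : Om) : Prop := exists2 g, inL (-2) g & w = om_minus g.

Definition dbar (f : A) : Om := om_minus (Xm f).

(* The balanced tensor product Omega^{(0,1)} (x)_B L_n : finite formal  *)
(* sums (lists) of pairs (w, phi) with w in Omega^{(0,1)}, phi in L_n,  *)
(* modulo the congruence generated by biadditivity and B-balancedness.  *)
Definition tvalid (n : int) (T : seq (Om * A)) : Prop :=
  forall p, p \in T -> inO01 p.1 /\ inL n p.2.

Inductive tens_eq (n : int) : seq (Om * A) -> seq (Om * A) -> Prop :=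
| te_refl T : tens_eq n T T
| te_sym T U : tens_eq n T U -> tens_eq n U T
| te_trans T U V : tens_eq n T U -> tens_eq n U V -> tens_eq n T V
| te_cat T T' U U' : tens_eq n T U -> tens_eq n T' U' ->
                     tens_eq n (T ++ T') (U ++ U')
| te_swap T U : tens_eq n (T ++ U) (U ++ T)
| te_zero phi : inL n phi -> tens_eq n [:: (0, phi)] [::]
| te_addl w w' phi : inO01 w -> inO01 w' -> inL n phi ->
                     tens_eq n [:: (w + w', phi)] [:: (w, phi); (w', phi)]
| te_addr w phi phi' : inO01 w -> inL n phi -> inL n phi' ->
                     tens_eq n [:: (w, phi + phi')] [:: (w, phi); (w, phi')]
| te_bal w b phi : inO01 w -> inL 0 b -> inL n phi ->
                     tens_eq n [:: (om_rmul 0 w b, phi)] [:: (w, b * phi)].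

Definition tens_rmul (T : seq (Om * A)) (f : A) : seq (Om * A) :=
  [seq (p.1, p.2 * f) | p <- T].

Definition mu2 (n : int) (T : seq (Om * A)) : Om :=
  \sum_(p <- T) om_rmul n p.1 p.2.

Definition mu1 (S : seq (A * Om)) : Om := \sum_(p <- S) om_lmul p.1 p.2.

Definition mu2_iso (n : int) : Prop :=
  (forall T U, tvalid n T -> tvalid n U -> mu2 n T = mu2 n U -> tens_eq n T U)
  /\ (forall g, inL (n - 2) g -> exists T, tvalid n T /\ mu2 n T = om_minus g).

(* mu_2^{-1} (a chosen representative of the preimage) *)
Definition mu2inv (n : int) (w : Om) : seq (Om * A) :=
  epsilon (inhabits [::]) (fun T => tvalid n T /\ mu2 n T = w).

Definition Phi (n : int) (S : seq (A * Om)) : seq (Om * A) := mu2inv n (mu1 S).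

Definition nablabar (n : int) (phi : A) : seq (Om * A) :=
  mu2inv n (om_minus (Xm phi)).

End Action.

(** The Leibniz rule for [X_-] twisted by [K] gives, for [f] in [B = L_0],
    [X_-(eta f) = (X_- eta) f + eta (X_- f)].  Multiplying by [omega_-] and
    reading the two summands through [mu_2] and [mu_1] respectively, both sides
    of the claimed identity have the same image under [mu_2]; since [mu_2] is
    injective on the balanced tensor product, they are equal there. *)

From HB Require Import structures.
From mathcomp Require Import all_boot all_order all_algebra.
From mathcomp Require Import reals.
From mathcomp Require Import complex.
From Stdlib Require Import ClassicalEpsilon.
From mathcomp Require Import ring.
Import Order.TTheory GRing.Theory Num.Theory.
Local Open Scope ring_scope.

Set Implicit Arguments.
Unset Strict Implicit.

Section OneForms.
Variables (R : realType) (q : R) (A : algType (complex R)).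

Lemma Clinear0 (f : A -> A) : Clinear f -> f 0 = 0.
Proof.
move=> lin_f; have := lin_f 1 0 0; rewrite !scale1r !addr0 => e.
by apply: (@addrI _ (f 0)); rewrite -e addr0.
Qed.

Lemma ClinearZ (f : A -> A) : Clinear f -> forall k x, f (k *: x) = k *: f x.
Proof. by move=> lin_f k x; have := lin_f k x 0; rewrite !addr0 Clinear0 ?addr0. Qed.

Lemma om_rmul0_minus (g f : A) : om_rmul q 0 (om_minus g) f = om_minus (g * f).
Proof. by rewrite /om_rmul /om_minus /= expr0z !scale1r !mul0r. Qed.

Lemma om_minusD (g h : A) : om_minus g + om_minus h = om_minus (g + h).
Proof. by rewrite /om_minus; congr (_, _, _) => /=; rewrite addr0. Qed.

Lemma mu2_cat n (T U : seq (Om A * A)) : mu2 q n (T ++ U) = mu2 q n T + mu2 q n U.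
Proof. by rewrite /mu2 big_cat. Qed.

(* [om_rmul q 0] is the right [B]-action on [Omega^1]. *)
Lemma mu2_tens_rmul n (T : seq (Om A * A)) f :
  mu2 q n (tens_rmul T f) = om_rmul q 0 (mu2 q n T) f.
Proof.
rewrite /om_rmul expr0z !scale1r.
elim: T => [|[[[x y] z] phi] T IH]; first by rewrite /mu2 !big_nil /= !mul0r.
rewrite /mu2 /tens_rmul /= !big_cons -!/(mu2 q n _) -/(tens_rmul T f) IH.
case: (mu2 q n T) => [[u v] w].
by rewrite /om_rmul /= !mulrDl !mulrA !scalerAl.
Qed.

Lemma mu1_dbar (K F : A -> A) (eta f : A) :
  mu1 [:: (eta, dbar q K F f)] = om_minus (eta * Xm q K F f).
Proof. by rewrite /mu1 big_seq1 /om_lmul /= !mulr0. Qed.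

Lemma mu2invP (K : A -> A) n (g : A) :
  mu2_iso q K n -> inL q K (n - 2) g ->
  tvalid q K n (mu2inv q K n (om_minus g)) /\
  mu2 q n (mu2inv q K n (om_minus g)) = om_minus g.
Proof. by move=> [_ onto] /onto; apply: epsilon_spec. Qed.

End OneForms.

Section GradedAction.
Variables (R : realType) (q : R) (A : algType (complex R)).
Variables (K Ki F : A -> A).
Hypothesis q_gt0 : 0 < q.
Hypotheses (lin_K : Clinear K) (lin_F : Clinear F).
Hypothesis KiK : forall x, Ki (K x) = x.
Hypothesis KF : forall x, K (F x) = (qC q)^-1 *: F (K x).
Hypothesis KM : forall x y, K (x * y) = K x * K y.
Hypothesis FM : forall x y, F (x * y) = F x * K y + Ki x * F y.

Lemma qh_neq0 : qh q != 0.
Proof. by rewrite /qh fmorph_eq0 sqrtr_eq0 -ltNge. Qed.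

Lemma qh_sqr : qh q ^+ 2 = qC q.
Proof. by rewrite /qh /qC -rmorphXn /= sqr_sqrtr // ltW. Qed.

Lemma inL_mul k l (x y : A) : inL q K k x -> inL q K l y -> inL q K (k + l) (x * y).
Proof.
rewrite /inL => Kx Ky.
by rewrite KM Kx Ky -scalerAl -scalerAr scalerA (expfzDr _ _ qh_neq0).
Qed.

Lemma inL_Xm k (x : A) : inL q K k x -> inL q K (k - 2) (Xm q K F x).
Proof.
rewrite /inL /Xm => Kx.
rewrite (ClinearZ lin_K) KF Kx !(ClinearZ lin_K) Kx !(ClinearZ lin_F) !scalerA.
congr (_ *: _).
by rewrite (expfzDr _ _ qh_neq0) -exprnN qh_sqr; ring.
Qed.

Lemma Xm_mul (x y : A) : Xm q K F (x * y) = Xm q K F x * K (K y) + x * Xm q K F y.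
Proof. by rewrite /Xm KM FM KiK scalerDr scalerAl scalerAr. Qed.

Lemma Xm_mulB (x f : A) :
  inL q K 0 f -> Xm q K F (x * f) = Xm q K F x * f + x * Xm q K F f.
Proof. by rewrite /inL expr0z scale1r => Kf; rewrite Xm_mul Kf Kf. Qed.

End GradedAction.

Theorem proposition3p7
  (R : realType) (q : R) (hq0 : 0 < q) (hq1 : q < 1)
  (A : algType (complex R)) (s : A -> A) (a c : A)
  (hA : is_ASUq2 q s a c)
  (K Ki E F : A -> A)
  (hact : Uq_module_algebra q K Ki E F)
  (hgens : Uq_action_gens q s a c K E F)
  (n : int) (hmu2 : mu2_iso q K n)
  (eta f : A) (heta : inL q K n eta) (hf : inL q K 0 f) :
  tens_eq q K n
    (nablabar q K F n (eta * f))
    (tens_rmul (nablabar q K F n eta) f ++ Phi q K n [:: (eta, dbar q K F f)]).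
Proof.
case: hact => [[lin_K _ _ lin_F] [_ KiK _ KF _] [KM _ _ FM] _].
have inL_M := inL_mul hq0 KM.
have inL_X := inL_Xm hq0 lin_K lin_F KF.
have inL_etaf : inL q K n (eta * f) by rewrite -[n]addr0; apply: inL_M.
have inL_etaXf : inL q K (n - 2) (eta * Xm q K F f).
  by rewrite -[n - 2]/(n + (0 - 2)); apply/inL_M/inL_X.
have [valid_lhs mu2_lhs] := mu2invP hmu2 (inL_X _ _ inL_etaf).
have [valid_eta mu2_eta] := mu2invP hmu2 (inL_X _ _ heta).
have [valid_phi mu2_phi] := mu2invP hmu2 inL_etaXf.
rewrite /nablabar /Phi mu1_dbar; apply: hmu2.1 => //.
  move=> p; rewrite mem_cat => /orP [/mapP [p0 /valid_eta [w0 phi0] ->] | /valid_phi //].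
  by split => //=; rewrite -[n]addr0; apply: inL_M.
rewrite mu2_cat mu2_tens_rmul mu2_lhs mu2_eta mu2_phi om_rmul0_minus om_minusD.
by rewrite (Xm_mulB KiK KM FM).
Qed.
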